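(* Let $(M,d)$ be a bounded metric space with uniform relative normal structure such that $\mathcal A(M)$ is compact, and let $T:M\to M$ be orbit-nonexpansive. Then $T$ has a fixed point.
   Context: For a metric space $(M,d)$, a mapping $T:M\to M$ and $x\in M$, the orbit of $x$ is $o_T(x)=\{x\}\cup\{T^nx:n\in\mathbb N\}$. For $x\in M$ and bounded $A\subseteq M$, $D(x,A)=\sup\{d(x,a):a\in A\}$ and $\delta(A)=\sup\{d(x,y):x,y\in A\}$. $T$ is orbit-nonexpansive if $d(Tx,Ty)\le D(x,o_T(y))$ for all $x,y\in M$. A subset of $M$ is admissible if it is an intersection of closed balls of $M$; $\mathcal A(M)$ denotes the family of admissible sets. $\mathcal A(M)$ is compact if every subfamily of $\mathcal A(M)$ all of whose finite intersections are nonempty has nonempty intersection. $(M,d)$ has uniform relative normal structure (URNS) if there is $c\in(0,1)$ such that for every admissible $A$ with $\delta(A)>0$: (i) there exists $z_A\in M$ with $D(z_A,A)\le c\,\delta(A)$; and (ii) every $x\in M$ with $D(x,A)\le c\,\delta(A)$ satisfies $d(x,z_A)\le c\,\delta(A)$. *)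

From mathcomp Require Import all_boot all_order all_algebra.
From mathcomp Require Import all_classical all_reals.
Set Implicit Arguments. Unset Strict Implicit. Unset Printing Implicit Defensive.
Import Order.TTheory GRing.Theory Num.Theory.
Local Open Scope classical_set_scope.
Local Open Scope ring_scope.

Section Defs.
Variables (R : realType) (M : Type) (d : M -> M -> R).

Definition is_metric : Prop :=
  [/\ forall x y, d x y = 0 <-> x = y,
      forall x y, d x y = d y x &
      forall x y z, d x z <= d x y + d y z].

Definition metric_bounded : Prop := exists B : R, forall x y, d x y <= B.

Definition orbit (T : M -> M) (x : M) : set M :=
  [set x] `|` [set iter n T x | n in [set: nat]].

Definition Dist (x : M) (A : set M) : R := sup [set d x a | a in A].

Definition diam (A : set M) : R := sup [set d x y | x in A & y in A].

Definition orbit_nonexpansive (T : M -> M) : Prop :=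
  forall x y, d (T x) (T y) <= Dist x (orbit T y).

Definition closed_ball (a : M) (r : R) : set M := [set x | d a x <= r].

Definition admissible (A : set M) : Prop :=
  exists F : set (M * R), (forall p, F p -> 0 <= p.2) /\
    A = \bigcap_(p in F) closed_ball p.1 p.2.

Definition admissible_compact : Prop :=
  forall F : set (set M), (forall A, F A -> admissible A) ->
    (forall G : set (set M), G `<=` F -> finite_set G -> G !=set0 ->
       (\bigcap_(A in G) A) !=set0) ->
    (\bigcap_(A in F) A) !=set0.

Definition URNS : Prop :=
  exists c : R, 0 < c < 1 /\
    forall A : set M, admissible A -> 0 < diam A ->
      exists zA : M, Dist zA A <= c * diam A /\
        forall x : M, Dist x A <= c * diam A -> d x zA <= c * diam A.

End Defs.

(* Call an admissible set A stable if it is nonempty, T-invariant,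
   and every closed ball B(x,s) containing A yields a ball B(Tx,s) containing
   A. By Zorn's lemma and compactness every nonempty invariant admissible set
   contains a minimal one, and a minimal one is stable because it equals the
   admissible hull of its image. The key step: for stable A with URNS centre
   z_A, the points within c.δ(A) of A and of every stable subset of that
   region form an invariant admissible set containing z_A; a stable subset B
   of it lies within c.δ(A) of A and has δ(B) <= c.δ(A). Iterating gives
   stable sets A_n whose mutual distances are geometric, compactness gives a
   point x within c^(n+1).δ(A_0)/(1-c) of every A_n, and orbit-nonexpansivity
   bounds d(x,Tx) by a geometric sequence, so Tx = x. *)

From Pilot Require Import Defs.
From mathcomp Require Import all_boot all_order all_algebra.
From mathcomp Require Import all_classical all_reals.
From mathcomp Require Import lra.
From mathcomp Require finmap.
Set Implicit Arguments. Unset Strict Implicit. Unset Printing Implicit Defensive.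
Import Order.TTheory GRing.Theory Num.Theory.
Local Open Scope classical_set_scope.
Local Open Scope ring_scope.

Section Geometric.
Variable R : archiRealFieldType.

Lemma bernoulli_ineq (h : R) n : 0 <= h -> 1 + n%:R * h <= (1 + h) ^+ n.
Proof.
move=> h0; elim: n => [|n IH]; first by rewrite mul0r addr0 expr0.
have n0 : 0 <= n%:R :> R by [].
rewrite exprS -natr1; nra.
Qed.

Lemma geometric_null (c t L : R) : 0 < c < 1 ->
  (forall n, t <= c ^+ n * L) -> t <= 0.
Proof.
move=> /andP[c0 c1] H; rewrite leNgt; apply/negP => t0.
have L0 : 0 < L by have := H 0%N; rewrite expr0 mul1r => h; lra.
pose h := c^-1 - 1.
have hc : c * (1 + h) = 1 by rewrite /h addrC subrK mulfV // gt_eqF.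
have h0 : 0 < h by rewrite /h subr_gt0 invf_gt1.
have ht : 0 < h * t by apply: mulr_gt0.
pose N := Num.bound (L / (h * t)).
have hN : L / (h * t) < N%:R.
  by apply: archi_boundP; apply: divr_ge0; apply: ltW.
have eL : L = (L / (h * t)) * (h * t) by rewrite divfK // gt_eqF.
have hB := bernoulli_ineq N (ltW h0).
have hQ : c ^+ N * (1 + h) ^+ N = 1 by rewrite -exprMn hc expr1n.
have hQ0 : 0 <= (1 + h) ^+ N by apply: exprn_ge0; lra.
have HN := H N.
have N0 : 0 <= N%:R :> R by [].
have : L < N%:R * h * t by nra.
have : t * (1 + h) ^+ N <= L by nra.
nra.
Qed.

End Geometric.

Section FiniteChain.
Variable M : Type.

Lemma seq_chain_min (s : seq (set M)) : s != [::] ->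
  (forall A B, A \in s -> B \in s -> A `<=` B \/ B `<=` A) ->
  exists2 m, m \in s & forall B, B \in s -> m `<=` B.
Proof.
elim: s => [//|a s IH] _ tot.
have [->|sn] := eqVneq s [::].
  by exists a; rewrite ?inE ?eqxx // => B; rewrite inE => /eqP ->.
have [|m ms hm] := IH sn.
  by move=> A B As Bs; apply: tot; rewrite inE ?As ?Bs orbT.
have mas : m \in a :: s by rewrite inE ms orbT.
have [am|ma] := tot a m (mem_head _ _) mas.
  exists a; first exact: mem_head.
  by move=> B; rewrite inE => /orP[/eqP ->//|/hm]; apply: subset_trans am.
exists m => //.
by move=> B; rewrite inE => /orP[/eqP ->//|/hm].
Qed.

Lemma finite_chain_min (G : set (set M)) : finite_set G -> G !=set0 ->
  total_on G subset -> exists2 m, G m & forall B, G B -> m `<=` B.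
Proof.
move=> /finite_fsetP[X ->] [A0 GA0] tot.
have [||m ms hm] := @seq_chain_min (finmap.enum_fset X).
- have h : A0 \in finmap.enum_fset X by [].
  by apply/eqP => e; rewrite e in h.
- by move=> A B As Bs; apply: tot.
by exists m.
Qed.

End FiniteChain.

Section FixedPoint.
Variables (R : realType) (M : Type) (d : M -> M -> R).
Hypothesis hmet : is_metric d.

Lemma dist_self x : d x x = 0.
Proof. by case: hmet => h _ _; apply/h. Qed.

Lemma dist_sym x y : d x y = d y x.
Proof. by case: hmet. Qed.

Lemma dist_triangle x y z : d x z <= d x y + d y z.
Proof. by case: hmet. Qed.

Lemma dist_ge0 x y : 0 <= d x y.
Proof. by have := dist_triangle x y x; rewrite dist_self (dist_sym y x); lra. Qed.

Lemma dist_le0_eq x y : d x y <= 0 -> x = y.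
Proof. by move=> h; case: hmet => H _ _; apply/H; have := dist_ge0 x y; lra. Qed.

(* [Dist] and [diam] are suprema: upper bounds of the defining sets bound
   them from above even when the set is empty. *)
Lemma Dist_le x A r : 0 <= r -> (forall a, A a -> d x a <= r) -> Dist d x A <= r.
Proof.
move=> r0 h; have [[a Aa]|A0] := pselect (A !=set0).
  by apply: ge_sup; [exists (d x a), a|move=> _ [b Ab <-]; exact: h].
rewrite /Dist (_ : [set d x a | a in A] = set0) ?sup0 //.
by apply/seteqP; split => // t [b Ab _]; apply: A0; exists b.
Qed.

Lemma diam_le A r : 0 <= r -> (forall x y, A x -> A y -> d x y <= r) -> diam d A <= r.
Proof.
move=> r0 h; have [[a Aa]|A0] := pselect (A !=set0).
  apply: ge_sup; first by exists (d a a), a => //; exists a.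
  by move=> _ [x Ax [y Ay <-]]; exact: h.
rewrite /diam (_ : [set d x y | x in A & y in A] = set0) ?sup0 //.
by apply/seteqP; split => // t [x Ax _]; apply: A0; exists x.
Qed.

(* In a bounded space the defining sets are bounded, so every element is
   below the supremum. *)
Hypothesis hbd : metric_bounded d.

Lemma le_Dist x A a : A a -> d x a <= Dist d x A.
Proof.
move=> Aa; case: hbd => B hB; apply: sup_upper_bound; last by exists a.
split; first by exists (d x a), a.
by exists B => _ [b _ <-]; exact: hB.
Qed.

Lemma le_diam A x y : A x -> A y -> d x y <= diam d A.
Proof.
move=> Ax Ay; case: hbd => B hB.
apply: sup_upper_bound; last by exists x => //; exists y.
split; first by exists (d x y), x => //; exists y.
by exists B => _ [a _ [b _ <-]]; exact: hB.
Qed.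

Lemma diam_ge0 A : A !=set0 -> 0 <= diam d A.
Proof. by case=> a Aa; rewrite -(dist_self a); exact: le_diam. Qed.

(* [centres A s] is the set of centres of closed balls of radius [s]
   containing [A]; [in_hull A y] says that [y] lies in every closed ball
   containing [A], i.e. in the admissible hull of [A]. *)
Definition centres (A : set M) (s : R) : set M :=
  [set x | forall a, A a -> d x a <= s].

Definition in_hull (A : set M) (y : M) : Prop :=
  forall p r, 0 <= r -> centres A r p -> d p y <= r.

Lemma admissible_hull_sub A : admissible d A -> in_hull A `<=` A.
Proof.
case=> F [F0 ->] y hy [p r] Fp /=; apply: hy; first exact: (F0 (p, r)).
by move=> a Aa; exact: (Aa (p, r)).
Qed.

Lemma hull_sub_admissible A : in_hull A `<=` A -> admissible d A.
Proof.
move=> H; exists [set pr | 0 <= pr.2 /\ centres A pr.2 pr.1].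
split; first by move=> p [].
apply/seteqP; split=> [y Ay [p r] [r0 h]|y hy]; first exact: h.
by apply: H => p r r0 h; exact: (hy (p, r) (conj r0 h)).
Qed.

Lemma hull_admissible A : admissible d (in_hull A).
Proof.
by apply: hull_sub_admissible => y hy p r r0 hp; apply: hy => // z; apply.
Qed.

Lemma admissibleI A B : admissible d A -> admissible d B -> admissible d (A `&` B).
Proof.
move=> aA aB; apply: hull_sub_admissible => y hy; split.
  by apply: (admissible_hull_sub aA) => p r r0 hp; apply: hy => // x [/hp].
by apply: (admissible_hull_sub aB) => p r r0 hp; apply: hy => // x [_ /hp].
Qed.

Lemma admissible_bigcap (I : Type) (D : set I) (F : I -> set M) :
  (forall i, D i -> admissible d (F i)) -> admissible d (\bigcap_(i in D) F i).
Proof.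
move=> aF; apply: hull_sub_admissible => y hy i Di.
by apply: (admissible_hull_sub (aF i Di)) => p r r0 hp; apply: hy => // x hx; exact/hp/hx.
Qed.

Lemma centres_admissible A s : 0 <= s -> admissible d (centres A s).
Proof.
move=> s0; apply: hull_sub_admissible => y hy a Aa; rewrite dist_sym.
by apply: hy => // x Cx; rewrite dist_sym; exact: Cx.
Qed.

Hypothesis hcpt : admissible_compact d.

(* The empty family has nonempty intersection, so M is inhabited. *)
Lemma admissible_compact_inhabited : inhabited M.
Proof.
have [x _] : \bigcap_(A in (set0 : set (set M))) A !=set0.
  by apply: (@hcpt set0) => // G G0 _ [A /G0].
by constructor.
Qed.

(* A chain of nonempty admissible sets has nonempty intersection: its
   finite subfamilies have a least element. *)
Lemma chain_bigcap_nonempty (F : set (set M)) :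
  (forall A, F A -> admissible d A /\ A !=set0) -> total_on F subset ->
  (\bigcap_(A in F) A) !=set0.
Proof.
move=> FA tot; apply: hcpt; first by move=> A /FA[].
move=> G GF fG G0.
have [m Gm hm] := finite_chain_min fG G0 (fun A B GA GB => tot A B (GF _ GA) (GF _ GB)).
have [x mx] := (FA m (GF m Gm)).2.
by exists x => B GB; exact: hm.
Qed.

Variable T : M -> M.
Hypothesis hone : orbit_nonexpansive d T.

Definition invariant (A : set M) : Prop := forall x, A x -> A (T x).

Lemma orbit_sub A y : invariant A -> A y -> Defs.orbit T y `<=` A.
Proof. by move=> iA Ay z [->//|[n _ <-]]; elim: n => [//|n IH] /=; exact: iA. Qed.

Lemma nonexpansive_centres A x y s : 0 <= s -> invariant A -> A y ->
  centres A s x -> d (T x) (T y) <= s.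
Proof.
move=> s0 iA Ay h; apply: le_trans (hone x y) _; apply: Dist_le => // a oa.
by apply: h; exact: orbit_sub oa.
Qed.

Definition stable (A : set M) : Prop :=
  [/\ admissible d A, A !=set0, invariant A &
      forall x s, 0 <= s -> centres A s x -> centres A s (T x)].

Definition inv_admissible_sub (S A : set M) : Prop :=
  [/\ A `<=` S, admissible d A, A !=set0 & invariant A].

Lemma chain_lower_bound S (F : set (set M)) :
  admissible d S -> S !=set0 -> invariant S ->
  (forall A, F A -> inv_admissible_sub S A) -> total_on F subset ->
  inv_admissible_sub S (S `&` \bigcap_(A in F) A).
Proof.
move=> aS nS iS FQ tot; split.
- by move=> x [].
- by apply: admissibleI aS _; apply: admissible_bigcap => A /FQ[].
- have [||x Fx] := @chain_bigcap_nonempty ([set S] `|` F).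
  + by move=> A [->|/FQ[]].
  + have FS A : F A -> A `<=` S by case/FQ.
    by move=> A B [->|FA] [->|FB]; [left|right; exact: FS|left; exact: FS|exact: tot].
  by exists x; split=> [|A FA]; apply: Fx; [left|right].
- move=> x [Sx Fx]; split; first exact: iS.
  by move=> A FA; case: (FQ A FA) => _ _ _; apply; exact: Fx.
Qed.

Lemma minimal_invariant_exists S :
  admissible d S -> S !=set0 -> invariant S ->
  exists A, inv_admissible_sub S A /\
    forall B, inv_admissible_sub S B -> B `<=` A -> B = A.
Proof.
move=> aS nS iS; pose Q := {A : set M | inv_admissible_sub S A}.
pose below (a b : Q) := `[< sval b `<=` sval a >].
have [| | | |[A QA] Amin] := @Zorn Q below.
- by move=> ?; apply/asboolP.
- by move=> ? ? ? /asboolP h1 /asboolP h2; apply/asboolP; exact: subset_trans h2 h1.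
- move=> [a Qa] [b Qb] /asboolP ba /asboolP ab.
  by apply: eq_exist; apply/seteqP; split.
- move=> Ch Chtot; have QL := @chain_lower_bound S [set sval a | a in Ch] aS nS iS.
  have {}QL : inv_admissible_sub S (S `&` \bigcap_(A in [set sval a | a in Ch]) A).
    apply: QL => [_ [a _ <-]|_ _ [a Ca <-] [b Cb <-]]; first exact: svalP.
    by have [/asboolP|/asboolP] := Chtot a b Ca Cb; [right|left].
  exists (exist _ _ QL) => a Ca.
  by apply/asboolP => x [_ hx]; apply: hx; exists a.
exists A; split=> // B QB BA.
by have /(congr1 sval) := Amin (exist _ B QB) (asboolT BA).
Qed.

(* A minimal nonempty invariant admissible set A is stable: the admissible
   hull of T(A) is again such a set inside A, hence equals A, and a ball
   B(x,s) containing A gives a ball B(Tx,s) containing T(A), hence A. *)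
Lemma minimal_invariant_stable S A : inv_admissible_sub S A ->
  (forall B, inv_admissible_sub S B -> B `<=` A -> B = A) -> stable A.
Proof.
move=> [AS aA [a0 Aa0] iA] Amin; split=> //; first by exists a0.
pose A' := in_hull (T @` A).
have A'A : A' `<=` A.
  apply: subset_trans (admissible_hull_sub aA) => y hy p r r0 hp.
  by apply: hy => // _ [a Aa <-]; exact/hp/iA.
have TA' : T @` A `<=` A' by move=> _ [a Aa <-] p r r0; apply.
have eA : A' = A.
  apply: Amin => //; split; [exact: subset_trans AS|exact: hull_admissible| |].
  - by exists (T a0); apply: TA'; exists a0.
  - by move=> y /A'A Ay; apply: TA'; exists y.
move=> x s s0 hx a; rewrite -eA => hull_a; apply: hull_a => // _ [b Ab <-].
exact: (nonexpansive_centres s0 iA).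
Qed.

Lemma stable_subset S : admissible d S -> S !=set0 -> invariant S ->
  exists2 A, stable A & A `<=` S.
Proof.
move=> aS nS iS; have [A [QA Amin]] := minimal_invariant_exists aS nS iS.
by exists A; [exact: minimal_invariant_stable Amin|case: QA].
Qed.

Lemma stable_exists : exists A, stable A.
Proof.
have [x0] := admissible_compact_inhabited.
have setT_adm : admissible d setT by exact: hull_sub_admissible.
have [A sA _] := stable_subset setT_adm (ex_intro _ x0 I) (fun _ _ => I).
by exists A.
Qed.

Variable c : R.
Hypothesis hc : 0 < c < 1.
Hypothesis hU : forall A : set M, admissible d A -> 0 < diam d A ->
  exists zA : M, Dist d zA A <= c * diam d A /\
    forall x : M, Dist d x A <= c * diam d A -> d x zA <= c * diam d A.

Definition shrinks (A B : set M) : Prop :=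
  (forall u a, B u -> A a -> d u a <= c * diam d A) /\ diam d B <= c * diam d A.

(* Let s = c δ(A) and C = centres A s. The set K of points of
   C that are within s of every stable subset of C is admissible, contains
   the URNS point z_A and is invariant; a stable subset of K shrinks A. *)
Lemma stable_shrink A : stable A -> exists2 B, stable B & shrinks A B.
Proof.
move=> sA; have [aA nA iA stA] := sA.
have [c0 _] := andP hc.
have s0 : 0 <= c * diam d A by apply: mulr_ge0; [exact: ltW|exact: diam_ge0].
have [d0|dpos] := eqVneq (diam d A) 0.
  exists A => //; rewrite /shrinks d0 mulr0; split=> [u a Au Aa|]; last by rewrite -d0.
  by rewrite -d0; exact: le_diam.
have {}dpos : 0 < diam d A by rewrite lt_def dpos diam_ge0.
have [z [hz1 hz2]] := hU aA dpos.
set s := c * diam d A in s0 hz1 hz2 *; pose C := centres A s.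
pose K := C `&` \bigcap_(P in [set P | stable P /\ P `<=` C]) centres P s.
have aK : admissible d K.
  apply: admissibleI; first exact: centres_admissible.
  by apply: admissible_bigcap => P _; exact: centres_admissible.
have zK : K z.
  split=> [a Aa|P [_ PC]]; first exact: le_trans (le_Dist _ Aa) hz1.
  by move=> p Pp; rewrite dist_sym; apply: hz2; apply: Dist_le => //; exact: PC.
have iK : invariant K.
  move=> y [Cy hy]; split; first exact: stA.
  move=> P [sP PC]; have [_ _ _ stP] := sP.
  by apply: stP => //; exact: (hy P (conj sP PC)).
have [B sB BK] := stable_subset aK (ex_intro _ z zK) iK.
have BC : B `<=` C by move=> x /BK [].
exists B => //; split=> [u a /BC|]; first exact.
by apply: diam_le => // x y /BK [_ hx]; apply: (hx B (conj sB BC)).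
Qed.

Lemma shrinking_sequence : exists As : nat -> set M,
  forall n, stable (As n) /\ shrinks (As n) (As n.+1).
Proof.
have [A0 sA0] := stable_exists.
have step A : exists B, stable A -> stable B /\ shrinks A B.
  have [sA|nsA] := pselect (stable A); last by exists A.
  by have [B sB shB] := stable_shrink sA; exists B.
have [f hf] := choice step.
have sAs n : stable (iter n f A0) by elim: n => [//|n IH]; have [] := hf _ IH.
by exists (fun n => iter n f A0) => n; split; [|have [] := hf _ (sAs n)].
Qed.

Section Limit.
Variable As : nat -> set M.
Hypothesis hAs : forall n, stable (As n) /\ shrinks (As n) (As n.+1).

Let D := diam d (As 0).

(* [radius n] bounds the distance from As n of every later As m. *)
Let radius n := c ^+ n.+1 * D / (1 - c).

Lemma diam_geometric n : diam d (As n) <= c ^+ n * D.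
Proof.
have [c0 _] := andP hc.
elim: n => [|n IH]; first by rewrite expr0 mul1r.
have [_ [_ h]] := hAs n; rewrite exprS -mulrA.
by apply: le_trans h _; apply: ler_wpM2l => //; exact: ltW.
Qed.

Lemma radius_ge0 n : 0 <= radius n.
Proof.
have [c0 c1] := andP hc; have [[_ nA _ _] _] := hAs 0.
apply: divr_ge0; last by rewrite subr_ge0 ltW.
by apply: mulr_ge0; [apply: exprn_ge0; exact: ltW|exact: diam_ge0].
Qed.

Lemma radius_succ n : radius n.+1 = c * radius n.
Proof. by rewrite /radius exprS !mulrA. Qed.

Lemma radius_gap n : (1 - c) * radius n = c ^+ n.+1 * D.
Proof.
have [_ c1] := andP hc.
by rewrite mulrC /radius divfK // subr_eq0 gt_eqF.
Qed.

(* Summing the shrinking steps as a geometric series. *)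
Lemma tail_bound k n u a : As (n + k).+1 u -> As n a -> d u a <= radius n.
Proof.
have [c0 _] := andP hc.
have step m w b : As m.+1 w -> As m b -> d w b <= c ^+ m.+1 * D.
  move=> Aw Ab; have [_ [hm _]] := hAs m; apply: le_trans (hm _ _ Aw Ab) _.
  by rewrite exprS -mulrA ler_wpM2l ?diam_geometric // ltW.
elim: k n u a => [|k IH] n u a.
  rewrite addn0 => Au Aa; have := step _ _ _ Au Aa; have := radius_gap n.
  have := radius_ge0 n; nra.
rewrite -addSnnS => Au Aa; have [[_ [w Aw] _ _] _] := hAs n.+1.
have := dist_triangle u w a; have := IH _ _ _ Au Aw; have := step _ _ _ Aw Aa.
by rewrite radius_succ; have := radius_gap n; lra.
Qed.

(* The sets [centres (As k) (radius k)], k <= n, have a common point for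
   every n; they form a decreasing chain, so compactness gives a point
   within radius n of As n for every n. *)
Lemma common_centre : exists x, forall n, centres (As n) (radius n) x.
Proof.
pose E n := \bigcap_(k in [set k | (k <= n)%N]) centres (As k) (radius k).
have [||x Ex] := @chain_bigcap_nonempty [set E n | n in setT].
- move=> _ [n _ <-]; split.
    by apply: admissible_bigcap => k _; apply: centres_admissible; exact: radius_ge0.
  have [[_ [u Au] _ _] _] := hAs n.+1.
  by exists u => k /= kn a; apply: (tail_bound (k := n - k)); rewrite subnKC.
- move=> _ _ [n _ <-] [m _ <-]; have [nm|mn] := leqP n m.
    by right=> x Ex k kn; apply: Ex; exact: leq_trans kn nm.
  by left=> x Ex k km; apply: Ex; exact: leq_trans km (ltnW mn).
exists x => n; have Exn : E n x by apply: Ex; exists n.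
exact: Exn n (leqnn n).
Qed.

(* Such a point is fixed: for y in As n, d(x,Tx) <= d(x,y) + d(y,Ty) +
   d(Ty,Tx), a geometric quantity in n. *)
Lemma common_centre_fixed x : (forall n, centres (As n) (radius n) x) -> T x = x.
Proof.
move=> hx; apply/esym/dist_le0_eq.
apply: (geometric_null hc (L := 2 * (c * D / (1 - c)) + D)) => n.
have [[_ [y Ay] iAs _] _] := hAs n.
have h1 := hx n y Ay.
have h2 := nonexpansive_centres (radius_ge0 n) iAs Ay (hx n).
have h3 : d y (T y) <= c ^+ n * D := le_trans (le_diam Ay (iAs _ Ay)) (diam_geometric n).
have h5 : radius n = c ^+ n * (c * D / (1 - c)) by rewrite /radius exprSr !mulrA.
have := dist_triangle x y (T x); have := dist_triangle y (T y) (T x).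
rewrite (dist_sym (T y)); nra.
Qed.

End Limit.

End FixedPoint.

Theorem corollary4p6 (R : realType) (M : Type) (d : M -> M -> R)
  (T : M -> M) :
  is_metric d -> metric_bounded d -> URNS d -> admissible_compact d ->
  orbit_nonexpansive d T ->
  exists x : M, T x = x.
Proof.
move=> hmet hbd [c [hc hU]] hcpt hone.
have [As hAs] := shrinking_sequence hmet hbd hcpt hone hc hU.
have [x hx] := common_centre hmet hbd hcpt hc hAs.
by exists x; exact: common_centre_fixed hx.
Qed.
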